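(* For every input $\sigma$ of List Update with Delays and every time $t$, the total cost (access cost plus swaps plus delay cost) incurred by ALG up to time $t$ is at most $6\sum_{k=1}^m d_k(t)$.
   Context: List Update with Delays. A set $\mathbb{E}$ of $n$ elements is kept in an ordered list (position $1$ is the head). An input $\sigma$ is a sequence of requests $r_1,\dots,r_m$; request $r_k$ specifies an element $e_k\in\mathbb{E}$, an arrival time $a_k$ and a delay function $D_k$ which is non-negative, non-decreasing, and $0$ up to time $a_k$. An algorithm may perform an access up to position $i$ at cost $i$, serving every pending request whose element currently lies in positions $1,\dots,i$, and may swap adjacent elements at cost $1$; actions are instantaneous. A request served at time $s$ incurs delay cost $D_k(s)$. Cost = access + swaps + delay. Algorithm ALG maintains a request counter $RC_k$ for each request and an element counter $EC_e$ for each element, with $EC_e=0$ initially. When $r_k$ arrives, $RC_k$ is created with value $0$. While $r_k$ is pending in ALG, $RC_k$ and $EC_{e_k}$ each increase by exactly the delay $r_k$ incurs; after $r_k$ is served, $RC_k$ stops increasing until it is deleted. Events: (i) prefix-request-counters event on $\ell\in[n]$, occurring when the sum of the non-deleted request counters of requests whose elements are currently in positions $1,\dots,\ell$ reaches $\ell$: ALG accesses the first $\min(2\ell,n)$ positions and deletes the request counters of requests for the elements in the first $\ell$ positions; (ii) element-counter event on $e$, occurring when $EC_e$ reaches the current position $\ell$ of $e$: ALG accesses the first $\min(2\ell,n)$ positions, deletes all request counters of requests for $e$, sets $EC_e\leftarrow 0$, and moves $e$ to the front by $\ell-1$ adjacent swaps. For a request $r_k$ let $s_k$ be the time ALG serves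 it ($s_k=\infty$ if never). Define $d_k(t)=D_k(\min(t,s_k))$ (for $s_k=\infty$, $d_k(t)=D_k(t)$), the delay ALG has incurred on $r_k$ up to time $t$. *)

From HB Require Import structures.
From mathcomp Require Import all_boot all_order all_algebra.
From mathcomp Require Import reals.
Set Implicit Arguments. Unset Strict Implicit. Unset Printing Implicit Defensive.
Import Order.TTheory GRing.Theory Num.Theory.
Local Open Scope ring_scope.

(* List Update with Delays.  Elements are 'I_n, requests are 'I_m.         *)
(* A request k asks for element [el k], arrives at [arr k], and has delay  *)
(* function [D k].                                                          *)

Definition valid_input (R : realType) (m : nat) (arr : 'I_m -> R)
    (D : 'I_m -> R -> R) : Prop :=
  [/\ (forall k t, 0 <= D k t),
      (forall k, {homo D k : x y / x <= y}) &
      (forall k t, t <= arr k -> D k t = 0)].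

Inductive alg_event (n : nat) : Type :=
  | PrefixEv of nat        (* prefix-request-counters event on l (1-based) *)
  | ElemEv of 'I_n.

Record alg_state (R : realType) (n m : nat) : Type := AlgState {
  st_list : seq 'I_n;            (* the list; head = position 1 *)
  st_srv  : 'I_m -> option R;    (* serving time, if already served *)
  st_del  : 'I_m -> bool;
  st_rst  : 'I_n -> option R     (* time of last reset of EC_e, if any *)
}.

Section Alg.
Variables (R : realType) (n m : nat).
Variables (el : 'I_m -> 'I_n) (arr : 'I_m -> R).

(* 0-based position of e in the list *)
Definition pos (S : alg_state R n m) (e : 'I_n) : nat := index e (st_list S).

Definition in_prefix (S : alg_state R n m) (i : nat) (e : 'I_n) : bool :=
  (pos S e < i)%N.

(* number of positions accessed by the event *)
Definition ev_depth (S : alg_state R n m) (ev : alg_event n) : nat :=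
  match ev with
  | PrefixEv l => minn (2 * l)%N n
  | ElemEv e => minn (2 * (pos S e).+1)%N n
  end.

(* access cost + swap cost of the event *)
Definition ev_cost (S : alg_state R n m) (ev : alg_event n) : nat :=
  match ev with
  | PrefixEv l => ev_depth S ev
  | ElemEv e => (ev_depth S ev + pos S e)%N   (* pos S e = l - 1 swaps *)
  end.

Definition step (S : alg_state R n m) (x : R * alg_event n) : alg_state R n m :=
  let tau := x.1 in let ev := x.2 in
  AlgState
    (match ev with ElemEv e => e :: rem e (st_list S) | PrefixEv _ => st_list S end)
    (fun k => match st_srv S k with
              | Some s => Some s
              | None => if (arr k <= tau) && in_prefix S (ev_depth S ev) (el k)
                        then Some tau else None
              end)
    (fun k => st_del S k ||
              ((arr k <= tau) &&
               match ev with
               | PrefixEv l => in_prefix S l (el k)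
               | ElemEv e => el k == e
               end))
    (fun x => match ev with
              | ElemEv e => if x == e then Some tau else st_rst S x
              | PrefixEv _ => st_rst S x
              end).

Definition init_state (L0 : seq 'I_n) : alg_state R n m :=
  AlgState L0 (fun _ => None) (fun _ => false) (fun _ => None).

Definition run_state (L0 : seq 'I_n) (evs : seq (R * alg_event n)) :=
  foldl step (init_state L0) evs.

Variable (D : 'I_m -> R -> R).

(* d_k(t) = D_k(min(t, s_k)) where s_k is the serving time of r_k in the
   run [evs] (s_k = infinity if never served). *)
Definition dly (L0 : seq 'I_n) (evs : seq (R * alg_event n)) (k : 'I_m) (t : R) : R :=
  D k (match st_srv (run_state L0 evs) k with Some s => Num.min t s | None => t end).

Section Counters.
Variables (L0 : seq 'I_n) (evs : seq (R * alg_event n)).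

(* sum of non-deleted request counters of requests whose element is in
   positions 1..l, at time t, in state S.  The value of a live counter
   RC_k is the delay r_k has incurred so far, i.e. d_k(t). *)
Definition RCsum (S : alg_state R n m) (t : R) (l : nat) : R :=
  \sum_(k | ~~ st_del S k && (arr k <= t) && in_prefix S l (el k)) dly L0 evs k t.

(* element counter EC_e at time t in state S: delay incurred by requests for
   e since the last reset of EC_e. *)
Definition EC (S : alg_state R n m) (t : R) (e : 'I_n) : R :=
  \sum_(k | el k == e)
     (dly L0 evs k t - match st_rst S e with Some r => dly L0 evs k r | None => 0 end).

Definition triggered (S : alg_state R n m) (t : R) (ev : alg_event n) : bool :=
  match ev with
  | PrefixEv l => (0 < l <= n)%N && (l%:R <= RCsum S t l)
  | ElemEv e => (pos S e).+1%:R <= EC S t e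
  end.

End Counters.

Definition dflt_ev : R * alg_event n := (0, PrefixEv n 0).

(* [evs] is (the complete list of events of) a run of ALG on the input, from
   the initial list L0:
   - events are ordered by time;
   - each event is performed at a moment when its counter condition holds;
   - at every time t, once all events of times <= t have been performed, no
     counter condition holds any more (events are performed when triggered). *)
Definition alg_run (L0 : seq 'I_n) (evs : seq (R * alg_event n)) : Prop :=
  [/\ sorted (fun x y : R * alg_event n => x.1 <= y.1) evs,
      (forall j, (j < size evs)%N ->
         let x := nth dflt_ev evs j in
         triggered L0 evs (run_state L0 (take j evs)) x.1 x.2) &
      (forall t : R,
         let S := run_state L0 [seq x <- evs | x.1 <= t] in
         (forall l, (0 < l <= n)%N -> RCsum L0 evs S t l < l%:R) /\
         (forall e, EC L0 evs S t e < (pos S e).+1%:R))].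

Definition alg_move_cost (L0 : seq 'I_n) (evs : seq (R * alg_event n)) (t : R) : nat :=
  \sum_(j < size evs | (nth dflt_ev evs j).1 <= t)
     ev_cost (run_state L0 (take j evs)) (nth dflt_ev evs j).2.

Definition alg_cost (L0 : seq 'I_n) (evs : seq (R * alg_event n)) (t : R) : R :=
  (alg_move_cost L0 evs t)%:R + \sum_(k < m) dly L0 evs k t.

End Alg.

From HB Require Import structures.
From mathcomp Require Import all_boot all_order all_algebra.
From mathcomp Require Import reals.
From mathcomp Require Import zify lra.
Import Order.TTheory GRing.Theory Num.Theory.
Local Open Scope ring_scope.

(* To a state S of ALG and a time t we attach the charge
     charge S t = 2 * (sum of d_k(t) over requests whose counter is deleted)
                + 3 * (sum over requests k of d_k(r), r the last reset of EC_(e_k)).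
   - A prefix event on l costs at most 2l, and it fires when the live
     counters in positions 1..l sum to at least l; deleting them raises the
     first part of the charge by at least 2l.
   - An element event on e at position l costs at most 2l + (l - 1) <= 3l,
     and it fires when EC_e >= l; resetting EC_e raises the second part of
     the charge by exactly 3 * EC_e >= 3l.
   Hence the access + swap cost of the events up to time t is at most the
   charge of the state they lead to.  Since deletions are permanent and all
   resets happen before t, each part of the charge is at most the total
   delay, so the charge is at most 5 * sum_k d_k(t), and adding the delay
   cost itself gives the factor 6.  The events up to time t form a prefix of
   the (time-sorted) event list, which lets the invariant be proved by
   induction along the run. *)

Lemma sorted_time_prefix {R : realType} {T : Type} (x0 : R * T)
    {s : seq (R * T)} (t : R) {j : nat} :
  sorted (fun x y : R * T => x.1 <= y.1) s -> (j < size s)%N ->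
  ((nth x0 s j).1 <= t) = (j < find (fun y : R * T => ~~ (y.1 <= t)%R) s)%N.
Proof.
move=> sorted_s lt_j_s; set N := find _ s.
case: (ltnP j N) => [lt_jN | le_Nj].
  by have /negPn := before_find x0 lt_jN.
have lt_N_s : (N < size s)%N := leq_ltn_trans le_Nj lt_j_s.
have /negbTE after_N : ~~ ((nth x0 s N).1 <= t).
  have has_late : has (fun y : R * T => ~~ (y.1 <= t)) s by rewrite has_find.
  by have := nth_find x0 has_late.
apply: contraFF after_N => le_jt; apply: le_trans le_jt.
exact: (@sorted_leq_nth _ (fun x y : R * T => x.1 <= y.1)
  (fun a b c ab bc => le_trans ab bc) (fun a => lexx a.1) x0 s sorted_s
  N j lt_N_s lt_j_s le_Nj).
Qed.

Section Charging.
Context {R : realType} {n m : nat}.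
Context {el : 'I_m -> 'I_n} {arr : 'I_m -> R} {D : 'I_m -> R -> R}.
Context {L0 : seq 'I_n} {evs : seq (R * alg_event n)}.
Hypothesis D_ge0 : forall k t, 0 <= D k t.
Hypothesis D_mono : forall k, {homo D k : x y / x <= y}.

Local Notation d := (dly el arr D L0 evs).
Local Notation step := (step el arr).

Lemma dly_ge0 k t : 0 <= d k t.
Proof. exact: D_ge0. Qed.

Lemma dly_mono k : {homo d k : s1 s2 / s1 <= s2}.
Proof.
move=> s1 s2 le12; apply: D_mono; case: (st_srv _ _) => // s.
by rewrite le_min !ge_min le12 lexx !orbT.
Qed.

Definition reset_delay (S : alg_state R n m) (k : 'I_m) : R :=
  if st_rst S (el k) is Some r then d k r else 0.

Definition charge (S : alg_state R n m) (t : R) : R :=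
  2 * \sum_(k | st_del S k) d k t + 3 * \sum_k reset_delay S k.

(* A triggered prefix event on l, occurring no later than t, is paid for by
   the counters it deletes. *)
Lemma prefix_step_charge S tau l t :
  triggered el arr D L0 evs S tau (PrefixEv n l) -> tau <= t ->
  (ev_cost S (PrefixEv n l))%:R + charge S t
    <= charge (step S (tau, PrefixEv n l)) t.
Proof.
move=> /andP[_ trig] le_tau_t.
set fresh := fun k => ~~ st_del S k && (arr k <= tau) && in_prefix S l (el k).
have del_split : \sum_(k | st_del (step S (tau, PrefixEv n l)) k) d k t
    = \sum_(k | st_del S k) d k t + \sum_(k | fresh k) d k t.
  rewrite (bigID (st_del S)) /=; congr (_ + _); apply: eq_bigl => k /=.
    by rewrite andb_idl // => ->.
  by rewrite /fresh andb_orl andbN /= andbC andbA.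
have RC_le : RCsum el arr D L0 evs S tau l <= \sum_(k | fresh k) d k t.
  by apply: ler_sum => k _; apply: dly_mono.
have cost_le : (ev_cost S (PrefixEv n l))%:R <= 2 * (l%:R : R).
  by rewrite /= -natrM ler_nat geq_minl.
rewrite /charge del_split; lra.
Qed.

(* A triggered element event on e is paid for by resetting EC_e. *)
Lemma elem_step_charge S tau e t :
  triggered el arr D L0 evs S tau (ElemEv e) ->
  (ev_cost S (ElemEv e))%:R + charge S t <= charge (step S (tau, ElemEv e)) t.
Proof.
rewrite /triggered => trig.
have del_grow : \sum_(k | st_del S k) d k t
    <= \sum_(k | st_del (step S (tau, ElemEv e)) k) d k t.
  rewrite [X in _ <= X](bigID (st_del S)) /=.
  have -> : \sum_(k | st_del (step S (tau, ElemEv e)) k && st_del S k) d k t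
      = \sum_(k | st_del S k) d k t.
    by apply: eq_bigl => k /=; rewrite andb_idl // => ->.
  by rewrite lerDl sumr_ge0 // => k _; apply: dly_ge0.
have reset_grow : \sum_k reset_delay (step S (tau, ElemEv e)) k
    = \sum_k reset_delay S k + EC el arr D L0 evs S tau e.
  rewrite /EC (big_mkcond (fun k => el k == e)) -big_split /=.
  apply: eq_bigr => k _; rewrite /reset_delay /=.
  by case: eqP => [->|_]; rewrite ?addr0 // addrC subrK.
have cost_le : (ev_cost S (ElemEv e))%:R <= 3 * ((pos S e).+1%:R : R).
  rewrite /= -natrM ler_nat.
  by have := geq_minl (2 * (pos S e).+1) n; lia.
rewrite /charge reset_grow; lra.
Qed.

Lemma step_charge {S} {x : R * alg_event n} {t} :
  triggered el arr D L0 evs S x.1 x.2 -> x.1 <= t ->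
  (ev_cost S x.2)%:R + charge S t <= charge (step S x) t.
Proof.
case: x => tau [l|e] /= trig le_tau_t.
  exact: prefix_step_charge.
exact: elem_step_charge.
Qed.

Lemma charge_le {S t} :
  (forall e r, st_rst S e = Some r -> r <= t) ->
  charge S t <= 5 * \sum_k d k t.
Proof.
move=> resets_before.
have del_le : \sum_(k | st_del S k) d k t <= \sum_k d k t.
  rewrite [X in _ <= X](bigID (st_del S)) /= lerDl.
  by apply: sumr_ge0 => k _; apply: dly_ge0.
have reset_le : \sum_k reset_delay S k <= \sum_k d k t.
  apply: ler_sum => k _; rewrite /reset_delay.
  case E: (st_rst _ _) => [r|]; last exact: dly_ge0.
  exact/dly_mono/(resets_before _ _ E).
rewrite /charge; lra.
Qed.

Local Notation state j := (run_state el arr L0 (take j evs)).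
Local Notation event j := (nth (dflt_ev R n) evs j).

Variable t : R.
Hypothesis evs_sorted : sorted (fun x y : R * alg_event n => x.1 <= y.1) evs.
Hypothesis evs_triggered : forall j, (j < size evs)%N ->
  triggered el arr D L0 evs (state j) (event j).1 (event j).2.

Definition events_upto : nat :=
  find (fun y : R * alg_event n => ~~ (y.1 <= t)) evs.

Lemma events_upto_size : (events_upto <= size evs)%N.
Proof. exact: find_size. Qed.

(* Since the events are sorted by time, they form a prefix of the run. *)
Lemma event_upto_time {j} : (j < events_upto)%N -> (event j).1 <= t.
Proof.
move=> lt_j; have lt_j_s := leq_trans lt_j events_upto_size.
by rewrite (sorted_time_prefix (dflt_ev R n) t evs_sorted lt_j_s).
Qed.

Lemma state_succ j : (j < size evs)%N -> state j.+1 = step (state j) (event j).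
Proof.
by move=> lt_j; rewrite /run_state (take_nth (dflt_ev R n) lt_j) foldl_rcons.
Qed.

Lemma move_cost_upto :
  alg_move_cost el arr L0 evs t
    = (\sum_(j < events_upto) ev_cost (state j) (event j).2)%N.
Proof.
rewrite (big_ord_widen_cond _ (fun=> true)
  (fun j => ev_cost (state j) (event j).2) events_upto_size).
apply: eq_bigl => j /=.
by rewrite (sorted_time_prefix (dflt_ev R n) t evs_sorted (ltn_ord j)).
Qed.

Lemma run_resets_before {j} : (j <= events_upto)%N ->
  forall e r, st_rst (state j) e = Some r -> r <= t.
Proof.
elim: j => [|j IH] lt_j e r; first by rewrite take0.
have lt_j_s := leq_trans lt_j events_upto_size.
rewrite state_succ //=; case: (event j) (event_upto_time lt_j) => tau [l|e'] /=.
  by move=> _; apply: IH (ltnW lt_j) e r.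
by move=> le_tau_t; case: eqP => [_ [<-] //|_]; apply: IH (ltnW lt_j) e r.
Qed.

Lemma run_charge {j} : (j <= events_upto)%N ->
  (\sum_(i < j) ev_cost (state i) (event i).2)%:R <= charge (state j) t.
Proof.
elim: j => [|j IH] lt_j.
  rewrite big_ord0 /charge take0 /=.
  by rewrite addr_ge0 // mulr_ge0 // sumr_ge0 // => k _; apply: dly_ge0.
have lt_j_s := leq_trans lt_j events_upto_size.
rewrite big_ord_recr natrD state_succ //.
apply: le_trans _ (step_charge (evs_triggered _ lt_j_s) (event_upto_time lt_j)).
by rewrite addrC lerD2l IH // ltnW.
Qed.

Lemma alg_move_cost_le : (alg_move_cost el arr L0 evs t)%:R <= 5 * \sum_k d k t.
Proof.
rewrite move_cost_upto; apply: le_trans (run_charge (leqnn _)) _.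
exact/charge_le/run_resets_before.
Qed.

End Charging.

Theorem mainTheorem11 (R : realType) (n m : nat)
    (el : 'I_m -> 'I_n) (arr : 'I_m -> R) (D : 'I_m -> R -> R)
    (L0 : seq 'I_n) (evs : seq (R * alg_event n)) :
  valid_input arr D ->
  perm_eq L0 (enum 'I_n) ->
  alg_run el arr D L0 evs ->
  forall t : R,
    alg_cost el arr D L0 evs t <= 6 * \sum_(k < m) dly el arr D L0 evs k t.
Proof.
move=> [D_ge0 D_mono _] _ [evs_sorted evs_triggered _] t.
have := alg_move_cost_le D_ge0 D_mono t evs_sorted evs_triggered.
rewrite /alg_cost; lra.
Qed.
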